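(* For every modal proposition $A$, $\mathsf{iK4}\vdash A^\Box\to\Box A^\Box$.
   Context: Modal language: propositional variables, $\bot$, $\wedge,\vee,\to$, $\Box$; atomic = variables and $\bot$. $\mathsf{iK4}$: intuitionistic propositional logic in the modal language plus $\Box(A\to B)\to(\Box A\to\Box B)$ and $\Box A\to\Box\Box A$, closed under modus ponens and necessitation. Box-translation: $A^\Box:=A\wedge\Box A$ for atomic $A$; $(A\circ B)^\Box:=A^\Box\circ B^\Box$ for $\circ\in\{\wedge,\vee\}$; $(A\to B)^\Box:=(A^\Box\to B^\Box)\wedge\Box(A^\Box\to B^\Box)$; $(\Box A)^\Box:=\Box(A^\Box)$. *)

Inductive form : Type :=
| Var : nat -> form
| Bot : form
| And : form -> form -> form
| Or  : form -> form -> form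
| Imp : form -> form -> form
| Box : form -> form.

Inductive iK4 : form -> Prop :=
| ax_K1 : forall A B, iK4 (Imp A (Imp B A))
| ax_S  : forall A B C,
    iK4 (Imp (Imp A (Imp B C)) (Imp (Imp A B) (Imp A C)))
| ax_andE1 : forall A B, iK4 (Imp (And A B) A)
| ax_andE2 : forall A B, iK4 (Imp (And A B) B)
| ax_andI  : forall A B, iK4 (Imp A (Imp B (And A B)))
| ax_orI1  : forall A B, iK4 (Imp A (Or A B))
| ax_orI2  : forall A B, iK4 (Imp B (Or A B))
| ax_orE   : forall A B C,
    iK4 (Imp (Imp A C) (Imp (Imp B C) (Imp (Or A B) C)))
| ax_efq   : forall A, iK4 (Imp Bot A)
| ax_K     : forall A B, iK4 (Imp (Box (Imp A B)) (Imp (Box A) (Box B)))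
| ax_4     : forall A, iK4 (Imp (Box A) (Box (Box A)))
| r_mp     : forall A B, iK4 (Imp A B) -> iK4 A -> iK4 B
| r_nec    : forall A, iK4 A -> iK4 (Box A).

Fixpoint boxtr (A : form) : form :=
  match A with
  | Var n => And (Var n) (Box (Var n))
  | Bot => And Bot (Box Bot)
  | And B C => And (boxtr B) (boxtr C)
  | Or B C => Or (boxtr B) (boxtr C)
  | Imp B C => And (Imp (boxtr B) (boxtr C)) (Box (Imp (boxtr B) (boxtr C)))
  | Box B => Box (boxtr B)
  end.

(* Call A box-stable when A -> Box A is derivable. Every formula X /\ Box X is
   box-stable by axiom 4, and box-stable formulas are closed under /\, \/ and
   Box. The box-translation of an atom or an implication has the shape
   X /\ Box X, and the remaining connectives are translated homomorphically,
   so induction on A shows that every A^Box is box-stable. *)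


Lemma imp_trans A B C : iK4 (Imp A B) -> iK4 (Imp B C) -> iK4 (Imp A C).
Proof.
  intros hAB hBC.
  exact (r_mp _ _ (r_mp _ _ (ax_S A B C) (r_mp _ _ (ax_K1 _ A) hBC)) hAB).
Qed.

Lemma imp_mp C A B : iK4 (Imp C (Imp A B)) -> iK4 (Imp C A) -> iK4 (Imp C B).
Proof. intros hAB hA. exact (r_mp _ _ (r_mp _ _ (ax_S C A B) hAB) hA). Qed.

Lemma imp_orE A B C : iK4 (Imp A C) -> iK4 (Imp B C) -> iK4 (Imp (Or A B) C).
Proof. intros hA hB. exact (r_mp _ _ (r_mp _ _ (ax_orE A B C) hA) hB). Qed.

Lemma box_mono A B : iK4 (Imp A B) -> iK4 (Imp (Box A) (Box B)).
Proof. intros hAB. exact (r_mp _ _ (ax_K A B) (r_nec _ hAB)). Qed.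

Lemma imp_box_andI C A B :
  iK4 (Imp C (Box A)) -> iK4 (Imp C (Box B)) -> iK4 (Imp C (Box (And A B))).
Proof.
  intros hA hB. apply imp_mp with (Box B); [|exact hB].
  apply imp_trans with (Box (Imp B (And A B))).
  - apply imp_trans with (Box A); [exact hA|]. apply box_mono, ax_andI.
  - apply ax_K.
Qed.

Definition box_stable (A : form) : Prop := iK4 (Imp A (Box A)).

Lemma box_stable_andBox X : box_stable (And X (Box X)).
Proof.
  apply imp_box_andI.
  - apply ax_andE2.
  - apply imp_trans with (Box X); [apply ax_andE2 | apply ax_4].
Qed.

Lemma box_stable_And A B :
  box_stable A -> box_stable B -> box_stable (And A B).
Proof.
  intros hA hB. apply imp_box_andI.
  - apply imp_trans with A; [apply ax_andE1 | exact hA].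
  - apply imp_trans with B; [apply ax_andE2 | exact hB].
Qed.

Lemma box_stable_Or A B :
  box_stable A -> box_stable B -> box_stable (Or A B).
Proof.
  intros hA hB. apply imp_orE.
  - apply imp_trans with (Box A); [exact hA|]. apply box_mono, ax_orI1.
  - apply imp_trans with (Box B); [exact hB|]. apply box_mono, ax_orI2.
Qed.

Lemma box_stable_Box A : box_stable (Box A).
Proof. apply ax_4. Qed.

Theorem lemma4p13 : forall A : form, iK4 (Imp (boxtr A) (Box (boxtr A))).
Proof.
  intros A; change (box_stable (boxtr A)).
  induction A; simpl.
  - apply box_stable_andBox.
  - apply box_stable_andBox.
  - apply box_stable_And; assumption.
  - apply box_stable_Or; assumption.
  - apply box_stable_andBox.
  - apply box_stable_Box.
Qed.
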